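(* Let $\mathcal{X},\mathcal{Y}$ be finite alphabets, let $W=W_{Y|X}$ be a channel from $\mathcal{X}$ to $\mathcal{Y}$, and for $P_0,P_1\in\Delta(\mathcal{X})$ let $Q_i(y)=\sum_x P_i(x)W(y|x)$. Then the SDPI coefficient $$\eta^J_\infty(W)=\sup_{P_0,P_1\in\Delta(\mathcal{X})}\frac{D^J_\infty(Q_0,Q_1)}{D^J_\infty(P_0,P_1)}$$ is achieved by binary input distributions, i.e., the supremum is unchanged when restricted to pairs $(P_0,P_1)$ supported on a common set of at most two elements of $\mathcal{X}$.
   Context: $\Delta(\mathcal{X})$ is the probability simplex on $\mathcal{X}$. $D_\infty(P\|Q)=\log\max_x\frac{P(x)}{Q(x)}$, and the Jeffreys–Rényi divergence of order infinity is $D^J_\infty(P,Q)=D_\infty(P\|Q)+D_\infty(Q\|P)$. *)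

From HB Require Import structures.
From mathcomp Require Import all_boot all_order all_algebra.
From mathcomp Require Import all_classical all_reals all_analysis.
Set Implicit Arguments. Unset Strict Implicit. Unset Printing Implicit Defensive.
Import Order.TTheory GRing.Theory Num.Theory.
Local Open Scope ring_scope.
Local Open Scope classical_set_scope.

Section Defs.
Variable R : realType.

Definition is_dist (T : finType) (P : T -> R) : Prop :=
  (forall x, 0 <= P x) /\ \sum_(x : T) P x = 1.

Definition is_channel (X Y : finType) (W : X -> Y -> R) : Prop :=
  forall x, is_dist (W x).

Definition out (X Y : finType) (W : X -> Y -> R) (P : X -> R) : Y -> R :=
  fun y => \sum_(x : X) P x * W x y.

(* D_oo(P||Q) = log max_x P(x)/Q(x), = +oo if P(x)>0 = Q(x) for some x
   (terms with P(x) = 0 contribute ratio 0). *)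
Definition Dinf (T : finType) (P Q : T -> R) : \bar R :=
  if [exists x, (0 < P x) && (Q x == 0)] then +oo%E
  else (ln (\big[Num.max/0]_(x : T) (P x / Q x)))%:E.

Definition DJinf (T : finType) (P Q : T -> R) : \bar R :=
  (Dinf P Q + Dinf Q P)%E.

Definition sdpi_ratio (X Y : finType) (W : X -> Y -> R) (P0 P1 : X -> R) : \bar R :=
  (fine (DJinf (out W P0) (out W P1)) / fine (DJinf P0 P1))%:E.

Definition admissible (X : finType) (P0 P1 : X -> R) : Prop :=
  is_dist P0 /\ is_dist P1 /\ (0 < DJinf P0 P1)%E /\ (DJinf P0 P1 < +oo)%E.

Definition eta_J_inf (X Y : finType) (W : X -> Y -> R) : \bar R :=
  ereal_sup [set r | exists P0 P1 : X -> R,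
    admissible P0 P1 /\ r = sdpi_ratio W P0 P1].

Definition binary_supported (X : finType) (P0 P1 : X -> R) : Prop :=
  exists a b : X, forall x, x != a -> x != b -> P0 x = 0 /\ P1 x = 0.

Definition eta_J_inf_binary (X Y : finType) (W : X -> Y -> R) : \bar R :=
  ereal_sup [set r | exists P0 P1 : X -> R,
    admissible P0 P1 /\ binary_supported P0 P1 /\ r = sdpi_ratio W P0 P1].

End Defs.

(* Let al = max P0/P1 and be = max P1/P0, so that D^J_oo(P0,P1) = ln (al be) > 0.  The
   nonnegative vectors u = be P0 - P1 and v = al P1 - P0 satisfy (al be - 1) P0 = al u + v and
   (al be - 1) P1 = u + be v, so every output likelihood ratio is
   Q0(y)/Q1(y) = h (Wu y) (Wv y)  with  h U V = (al U + V) / (U + be V),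
   which increases in U and decreases in V.  If y1, y2 maximise Q0/Q1 and Q1/Q0, then
   D^J_oo(Q0,Q1) = ln (h1 / h2).  Now replace u by a point mass at a letter a maximising
   W(y1|x)/W(y2|x) and v by a point mass at a letter b maximising W(y2|x)/W(y1|x), scaled so
   that Wu(y1) and Wv(y2) are unchanged.  By the mediant inequality Wu(y2) and Wv(y1) can only
   decrease, so h grows at y1 and shrinks at y2.  The normalised pair proportional to
   (al u + v, u + be v) built from the two point masses lives on {a, b}, still has
   D^J_oo = ln (al be), and its output divergence is at least ln (h1' / h2') >= ln (h1 / h2).
   When D^J_oo(Q0,Q1) = 0 any binary pair of this form will do. *)

From mathcomp Require Import all_boot all_order all_algebra.
From mathcomp Require Import all_classical all_reals all_analysis.
From mathcomp Require Import ring lra.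
Set Implicit Arguments. Unset Strict Implicit. Unset Printing Implicit Defensive.
Import Order.TTheory GRing.Theory Num.Theory.
Local Open Scope ring_scope.

Section Divergences.
Variables (R : realType) (T : finType).
Implicit Types (P Q : T -> R) (k : R).

Definition max_ratio P Q : R := \big[Num.max/0]_(x : T) (P x / Q x).

Lemma max_ratio_ge0 P Q : 0 <= max_ratio P Q.
Proof. exact: bigmax_ge_id. Qed.

Lemma le_max_ratio P Q x : P x / Q x <= max_ratio P Q.
Proof. exact: le_bigmax. Qed.

Lemma max_ratio_le P Q k : 0 <= k -> (forall x, P x / Q x <= k) -> max_ratio P Q <= k.
Proof. by move=> k_ge0 le_k; apply: bigmax_le. Qed.

Lemma max_ratio_attained P Q (x0 : T) : (forall x, 0 <= P x) -> (forall x, 0 <= Q x) ->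
  exists x, max_ratio P Q = P x / Q x.
Proof.
by move=> P_ge0 Q_ge0; eexists; apply: (bigmax_eq_arg _ x0) => // x _; rewrite divr_ge0.
Qed.

Lemma dominated_support P Q k x : 0 <= Q x -> P x <= k * Q x -> 0 < P x -> 0 < Q x.
Proof.
move=> Q_ge0 PkQ Px_gt0; rewrite lt_neqAle Q_ge0 andbT.
by apply: contraTneq Px_gt0 => Qx0; rewrite -leNgt (le_trans PkQ) // -Qx0 mulr0.
Qed.

Lemma le_max_ratio_mul P Q x : 0 <= P x -> 0 <= Q x -> (0 < P x -> 0 < Q x) ->
  P x <= max_ratio P Q * Q x.
Proof.
move=> P_ge0 Q_ge0 supp; have [Px_gt0 | Px_le0] := ltP 0 (P x).
  by rewrite -ler_pdivrMr ?le_max_ratio ?supp.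
exact: le_trans Px_le0 (mulr_ge0 (max_ratio_ge0 _ _) Q_ge0).
Qed.

Lemma max_ratio_eq P Q k a : (forall x, 0 <= P x) -> (forall x, 0 <= Q x) ->
  (forall x, P x <= k * Q x) -> 0 < Q a -> P a = k * Q a -> max_ratio P Q = k.
Proof.
move=> P_ge0 Q_ge0 PkQ Qa_gt0 Pa; have k_ge0 : 0 <= k by rewrite -(pmulr_lge0 _ Qa_gt0) -Pa.
apply/le_anti/andP; split.
  apply: max_ratio_le => // x; have [-> | Qx_neq0] := eqVneq (Q x) 0.
    by rewrite invr0 mulr0.
  by rewrite ler_pdivrMr ?PkQ // lt_neqAle eq_sym Qx_neq0 Q_ge0.
by rewrite -[leLHS](mulfK (lt0r_neq0 Qa_gt0)) -Pa le_max_ratio.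
Qed.

Lemma ln_ratio_pair_le P Q x1 x2 : 0 < P x1 / Q x1 -> 0 < Q x2 / P x2 ->
  ln (P x1 / Q x1 * (Q x2 / P x2)) <= ln (max_ratio P Q) + ln (max_ratio Q P).
Proof.
move=> r1_gt0 r2_gt0; rewrite lnM ?posrE //.
apply: lerD; rewrite ler_ln ?posrE ?le_max_ratio //.
  exact: lt_le_trans r1_gt0 (le_max_ratio _ _ _).
exact: lt_le_trans r2_gt0 (le_max_ratio _ _ _).
Qed.

Lemma Dinf_supported P Q : (forall x, 0 < P x -> 0 < Q x) ->
  Dinf P Q = (ln (max_ratio P Q))%:E.
Proof.
move=> supp; rewrite /Dinf; case: existsP => // -[x /andP[/supp + /eqP Qx0]].
by rewrite Qx0 ltxx.
Qed.

Lemma Dinf_neq_ninfty P Q : Dinf P Q != -oo%E.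
Proof. by rewrite /Dinf; case: ifP. Qed.

Lemma Dinf_support P Q : (forall x, 0 <= Q x) -> Dinf P Q != +oo%E ->
  forall x, 0 < P x -> 0 < Q x.
Proof.
move=> Q_ge0; rewrite /Dinf; case: existsP => // noX _ x Px_gt0.
rewrite lt_neqAle Q_ge0 andbT eq_sym; apply/negP => /eqP Qx0.
by apply: noX; exists x; rewrite Px_gt0 Qx0 eqxx.
Qed.

Lemma DJinf_dominated P0 P1 k0 k1 : (forall x, 0 <= P0 x) -> (forall x, 0 <= P1 x) ->
  (forall x, P0 x <= k0 * P1 x) -> (forall x, P1 x <= k1 * P0 x) ->
  DJinf P0 P1 = (ln (max_ratio P0 P1) + ln (max_ratio P1 P0))%:E.
Proof.
move=> P0_ge0 P1_ge0 P01 P10.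
by rewrite /DJinf !Dinf_supported // => x; apply: dominated_support.
Qed.

Lemma sum_gt0_exists (F : T -> R) : 0 < \sum_x F x -> exists x, 0 < F x.
Proof.
move=> sum_gt0; apply/not_existsP => noX; move: sum_gt0; apply/negP; rewrite -leNgt.
by apply: sumr_le0 => x _; rewrite leNgt; apply/negP/noX.
Qed.

Lemma le_sum_term (F : T -> R) a : (forall x, 0 <= F x) -> F a <= \sum_x F x.
Proof. by move=> F_ge0; rewrite (bigD1 a) //= lerDl sumr_ge0. Qed.

Lemma dist_pos P : is_dist P -> exists x, 0 < P x.
Proof. by case=> _ sum1; apply: sum_gt0_exists; rewrite sum1 ltr01. Qed.

Lemma dist_dominated_ge1 P Q k : is_dist P -> is_dist Q -> (forall x, P x <= k * Q x) -> 1 <= k.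
Proof.
move=> [_ sumP] [_ sumQ] PkQ; rewrite -sumP -[k]mulr1 -sumQ mulr_sumr.
exact: ler_sum.
Qed.

Lemma max_ratio_ge1 P Q : is_dist P -> is_dist Q -> (forall x, 0 < P x -> 0 < Q x) ->
  1 <= max_ratio P Q.
Proof.
move=> distP distQ supp; have [P_ge0 _] := distP; have [Q_ge0 _] := distQ.
apply: (dist_dominated_ge1 distP distQ) => x.
exact: le_max_ratio_mul (P_ge0 x) (Q_ge0 x) (@supp x).
Qed.

Lemma admissible_max_ratio P0 P1 : admissible P0 P1 ->
  [/\ 1 <= max_ratio P0 P1, 1 <= max_ratio P1 P0,
      1 < max_ratio P0 P1 * max_ratio P1 P0,
      forall x, P0 x <= max_ratio P0 P1 * P1 x &
      forall x, P1 x <= max_ratio P1 P0 * P0 x].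
Proof.
move=> [dist0 [dist1 [DJ_gt0 DJ_fin]]].
have [P0_ge0 _] := dist0; have [P1_ge0 _] := dist1.
have [D01 D10] : Dinf P0 P1 != +oo%E /\ Dinf P1 P0 != +oo%E.
  by split; apply: contra_ltN DJ_fin => /eqP D; rewrite /DJinf D ?addye ?addey ?Dinf_neq_ninfty.
have supp01 := Dinf_support P1_ge0 D01; have supp10 := Dinf_support P0_ge0 D10.
have al_ge1 := max_ratio_ge1 dist0 dist1 supp01.
have be_ge1 := max_ratio_ge1 dist1 dist0 supp10.
split=> // [|x|x]; last 2 first.
- exact: le_max_ratio_mul (P0_ge0 x) (P1_ge0 x) (@supp01 x).
- exact: le_max_ratio_mul (P1_ge0 x) (P0_ge0 x) (@supp10 x).
move: DJ_gt0; rewrite /DJinf !Dinf_supported // lte_fin -lnM ?posrE; last 2 first.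
- exact: lt_le_trans ltr01 al_ge1.
- exact: lt_le_trans ltr01 be_ge1.
by move=> lnM_gt0; rewrite ltNge; apply/negP => /ln_le0; rewrite leNgt lnM_gt0.
Qed.

End Divergences.

Section Mixture.
Variables (R : realType) (T : finType).
Implicit Types (s t k : R) (u v p q : T -> R).

Definition mixture s t u v : T -> R := fun x => s * u x + t * v x.

Definition delta (a : T) : T -> R := fun x => (x == a)%:R.

Definition normalize p : T -> R := fun x => (\sum_z p z)^-1 * p x.

Lemma sum_deltaM a (F : T -> R) : \sum_x delta a x * F x = F a.
Proof.
rewrite (bigD1 a) //= /delta eqxx mul1r big1 ?addr0 // => x /negbTE ->.
by rewrite mul0r.
Qed.

Lemma normalize_dist p : (forall x, 0 <= p x) -> 0 < \sum_x p x -> is_dist (normalize p).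
Proof.
move=> p_ge0 sum_gt0; apply: conj => [x|].
  by rewrite /normalize mulr_ge0 ?p_ge0 // invr_ge0 ltW.
by rewrite -mulr_sumr mulVf ?lt0r_neq0.
Qed.

Lemma normalize_scale p q k x : \sum_z p z != 0 -> \sum_z q z != 0 ->
  k * (\sum_z q z) / (\sum_z p z) * normalize q x = (\sum_z p z)^-1 * (k * q x).
Proof. by rewrite /normalize => Sp_neq0 Sq_neq0; field; apply/andP. Qed.

End Mixture.

Arguments delta {R T} a x.

Section Channel.
Variables (R : realType) (X Y : finType) (W : X -> Y -> R).
Implicit Types (P u v : X -> R) (s t k : R).

Lemma out_mixture s t u v y : out W (mixture s t u v) y = s * out W u y + t * out W v y.
Proof.
rewrite /out /mixture !mulr_sumr -big_split /=; apply: eq_bigr => x _; ring.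
Qed.

Lemma outZ k P y : out W (fun x => k * P x) y = k * out W P y.
Proof. by rewrite /out mulr_sumr; apply: eq_bigr => x _; rewrite mulrA. Qed.

Lemma out_delta a y : out W (delta a) y = W a y.
Proof. exact: sum_deltaM. Qed.

Hypothesis W_ge0 : forall x y, 0 <= W x y.

Lemma out_ge0 P : (forall x, 0 <= P x) -> forall y, 0 <= out W P y.
Proof. by move=> P_ge0 y; apply: sumr_ge0 => x _; rewrite mulr_ge0. Qed.

Lemma out_le P0 P1 k : (forall x, P0 x <= k * P1 x) -> forall y, out W P0 y <= k * out W P1 y.
Proof.
move=> P01 y; rewrite -outZ; apply: ler_sum => x _.
by rewrite ler_wpM2r.
Qed.

Lemma sdpi_ratio_dominated P0 P1 k0 k1 : (forall x, 0 <= P0 x) -> (forall x, 0 <= P1 x) ->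
  (forall x, P0 x <= k0 * P1 x) -> (forall x, P1 x <= k1 * P0 x) ->
  sdpi_ratio W P0 P1 =
  ((ln (max_ratio (out W P0) (out W P1)) + ln (max_ratio (out W P1) (out W P0))) /
   (ln (max_ratio P0 P1) + ln (max_ratio P1 P0)))%:E.
Proof.
move=> P0_ge0 P1_ge0 P01 P10; rewrite /sdpi_ratio (DJinf_dominated P0_ge0 P1_ge0 P01 P10).
by rewrite (DJinf_dominated (out_ge0 P0_ge0) (out_ge0 P1_ge0) (out_le P01) (out_le P10)).
Qed.

End Channel.

Lemma out_dist (R : realType) (X Y : finType) (W : X -> Y -> R) P :
  is_channel W -> is_dist P -> is_dist (out W P).
Proof.
move=> chW [P_ge0 sumP]; have W_ge0 x y : 0 <= W x y by case: (chW x).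
apply: conj => [|]; first exact: out_ge0.
rewrite /out exchange_big /= -[RHS]sumP; apply: eq_bigr => x _.
by rewrite -mulr_sumr; case: (chW x) => _ ->; rewrite mulr1.
Qed.

Lemma comb_gt0 (R : numDomainType) (s t U V : R) : 0 < s -> 0 < t ->
  0 <= U -> 0 <= V -> 0 < U + V -> 0 < s * U + t * V.
Proof.
move=> s_gt0 t_gt0 U_ge0 V_ge0 UV_gt0; have [U0 | U_neq0] := eqVneq U 0.
  by move: UV_gt0; rewrite U0 mulr0 !add0r; apply: mulr_gt0.
have U_gt0 : 0 < U by rewrite lt_neqAle eq_sym U_neq0.
by apply: ltr_pwDl; [exact: mulr_gt0 | exact: mulr_ge0 (ltW t_gt0) V_ge0].
Qed.

Section MixtureRatio.
Variables (R : realFieldType) (al be : R).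
Hypotheses (al_gt0 : 0 < al) (be_gt0 : 0 < be).
Implicit Types (U V c la mu : R).

Definition mixture_ratio U V : R := (al * U + V) / (U + be * V).

Lemma mixture_ratio_gt0 U V : 0 <= U -> 0 <= V -> 0 < U + V -> 0 < mixture_ratio U V.
Proof.
move=> U_ge0 V_ge0 UV_gt0.
apply: divr_gt0; [rewrite -[V in _ + V]mul1r | rewrite -[U in U + _]mul1r].
  exact: comb_gt0.
exact: comb_gt0.
Qed.

Lemma mixture_ratioZ c U V : c != 0 -> mixture_ratio (c * U) (c * V) = mixture_ratio U V.
Proof.
move=> c_neq0; rewrite /mixture_ratio -[c * U + _]/(c * U + be * (c * V)).
by rewrite !(mulrCA _ c) -!mulrDr invfM mulrACA divff // mul1r.
Qed.

Lemma mixture_ratio_decomp q0 q1 : al * be != 1 ->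
  mixture_ratio (be * q0 - q1) (al * q1 - q0) = q0 / q1.
Proof.
move=> albe_neq1; rewrite /mixture_ratio.
have -> : al * (be * q0 - q1) + (al * q1 - q0) = (al * be - 1) * q0 by ring.
have -> : be * q0 - q1 + be * (al * q1 - q0) = (al * be - 1) * q1 by ring.
by rewrite invfM mulrACA divff ?subr_eq0 // mul1r.
Qed.

Lemma mixture_ratio_point_div la mu (w1 w2 : R) : 0 < la -> 0 < mu -> 0 < w1 -> 0 < w2 ->
  mixture_ratio (la * w1) (mu * w1) / mixture_ratio (la * w2) (mu * w2) = 1.
Proof.
move=> la_gt0 mu_gt0 w1_gt0 w2_gt0; rewrite ![_ * w1]mulrC ![_ * w2]mulrC.
rewrite !mixture_ratioZ ?lt0r_neq0 // divff // lt0r_neq0 //.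
by rewrite mixture_ratio_gt0 ?ltW ?addr_gt0.
Qed.

Hypothesis albe_ge1 : 1 <= al * be.

Lemma le_mixture_ratioU U' U V : 0 <= U' -> U' <= U -> 0 < V ->
  mixture_ratio U' V <= mixture_ratio U V.
Proof.
move=> U'_ge0 U'U V_gt0; have beV_gt0 := mulr_gt0 be_gt0 V_gt0.
rewrite /mixture_ratio ler_pdivrMr ?ltr_wpDl // mulrAC ler_pdivlMr; last first.
  exact: ltr_wpDl (le_trans U'_ge0 U'U) beV_gt0.
have : 0 <= (al * be - 1) * V * (U - U') by rewrite !mulr_ge0 ?subr_ge0 // ltW.
nra.
Qed.

Lemma le_mixture_ratioV U V' V : 0 <= V' -> V' <= V -> 0 < U ->
  mixture_ratio U V <= mixture_ratio U V'.
Proof.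
move=> V'_ge0 V'V U_gt0; have be_ge0 := ltW be_gt0.
rewrite /mixture_ratio ler_pdivrMr ?ltr_pwDl ?mulr_ge0 ?(le_trans V'_ge0 V'V) //.
rewrite mulrAC ler_pdivlMr ?ltr_pwDl ?mulr_ge0 //.
have : 0 <= (al * be - 1) * U * (V - V') by rewrite !mulr_ge0 ?subr_ge0 // ltW.
nra.
Qed.

End MixtureRatio.

Lemma out_ratio_mixture (R : realType) (X Y : finType) (W : X -> Y -> R) (P0 P1 : X -> R)
    (al be : R) y :
  al * be != 1 -> out W P0 y / out W P1 y =
  mixture_ratio al be (out W (mixture be (-1) P0 P1) y) (out W (mixture al (-1) P1 P0) y).
Proof. by move=> albe_neq1; rewrite !out_mixture !mulN1r mixture_ratio_decomp. Qed.

(* Maximising f / (f + g) rather than f / g sidesteps the zeros of g. *)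
Lemma exists_extreme_ratio (R : realFieldType) (T : finType) (f g : T -> R) :
  (forall x, 0 <= f x) -> (forall x, 0 <= g x) -> (exists x, 0 < f x) ->
  exists2 a, 0 < f a & forall x, f x * g a <= f a * g x.
Proof.
move=> f_ge0 g_ge0 [x0 fx0_gt0].
pose F x := f x / (f x + g x).
have [a _ F_max'] := @arg_maxP _ _ _ x0 predT F isT.
have F_max x : F x <= F a := F_max' x isT.
have Fa_gt0 : 0 < F a.
  apply: lt_le_trans (F_max x0); apply: divr_gt0 => //.
  exact: ltr_pwDl fx0_gt0 (g_ge0 x0).
have fa_gt0 : 0 < f a.
  rewrite lt_neqAle f_ge0 andbT; apply: contraTneq Fa_gt0 => fa0.
  by rewrite /F -fa0 mul0r ltxx.
exists a => // x.
have [fgx0 | fgx_neq0] := eqVneq (f x + g x) 0.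
  have -> : f x = 0 by apply/eqP; move/eqP: fgx0; rewrite paddr_eq0 // => /andP[].
  by rewrite mul0r mulr_ge0 ?g_ge0 ?ltW.
have fgx_gt0 : 0 < f x + g x by rewrite lt_neqAle eq_sym fgx_neq0 addr_ge0.
have fga_gt0 : 0 < f a + g a by exact: ltr_pwDl fa_gt0 (g_ge0 a).
have := F_max x; rewrite /F ler_pdivrMr // mulrAC ler_pdivlMr //.
by rewrite !mulrDr [f a * f x]mulrC lerD2l.
Qed.

Section ChannelExtremes.
Variables (R : realType) (X Y : finType) (W : X -> Y -> R).
Hypothesis W_ge0 : forall x y, 0 <= W x y.

Lemma out_cross_le (u : X -> R) a y1 y2 : (forall x, 0 <= u x) ->
  (forall x, W x y1 * W a y2 <= W a y1 * W x y2) ->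
  out W u y1 * W a y2 <= W a y1 * out W u y2.
Proof.
move=> u_ge0 cross; rewrite /out mulr_suml mulr_sumr; apply: ler_sum => x _.
by rewrite -mulrA [X in _ <= X]mulrCA; apply: ler_wpM2l.
Qed.

Lemma out_gt0_exists (u : X -> R) y : (forall x, 0 <= u x) -> 0 < out W u y ->
  exists x, 0 < W x y.
Proof.
move=> u_ge0 /sum_gt0_exists [x uW_gt0]; exists x.
rewrite lt_neqAle W_ge0 andbT; apply: contraTneq uW_gt0 => W0.
by rewrite -W0 mulr0 ltxx.
Qed.

Lemma point_masses_improve (al be : R) (u v : X -> R) y1 y2 :
  0 < al -> 0 < be -> 1 <= al * be ->
  (forall x, 0 <= u x) -> (forall x, 0 <= v x) ->
  0 < out W u y1 -> 0 < out W v y2 ->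
  exists a b (la mu : R), [/\ 0 < la, 0 < mu, 0 < W a y1, 0 < W b y2 &
    mixture_ratio al be (out W u y1) (out W v y1) /
      mixture_ratio al be (out W u y2) (out W v y2) <=
    mixture_ratio al be (la * W a y1) (mu * W b y1) /
      mixture_ratio al be (la * W a y2) (mu * W b y2)].
Proof.
move=> al_gt0 be_gt0 albe_ge1 u_ge0 v_ge0 U1_gt0 V2_gt0.
have [a Wa1_gt0 cross_a] := exists_extreme_ratio (W_ge0 ^~ y1) (W_ge0 ^~ y2)
  (out_gt0_exists u_ge0 U1_gt0).
have [b Wb2_gt0 cross_b] := exists_extreme_ratio (W_ge0 ^~ y2) (W_ge0 ^~ y1)
  (out_gt0_exists v_ge0 V2_gt0).
set U1 := out W u y1; set U2 := out W u y2; set V1 := out W v y1; set V2 := out W v y2.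
pose la := U1 / W a y1; pose mu := V2 / W b y2.
have la_gt0 : 0 < la by rewrite divr_gt0.
have mu_gt0 : 0 < mu by rewrite divr_gt0.
exists a, b, la, mu; split => //.
rewrite /la /mu !divfK ?lt0r_neq0 // -/la -/mu.
have la_a2 : la * W a y2 <= U2.
  by rewrite mulrAC ler_pdivrMr // [X in _ <= X]mulrC; apply: out_cross_le.
have mu_b1 : mu * W b y1 <= V1.
  by rewrite mulrAC ler_pdivrMr // [X in _ <= X]mulrC; apply: out_cross_le.
have U_ge0 := out_ge0 W_ge0 u_ge0; have V_ge0 := out_ge0 W_ge0 v_ge0.
have h_gt0 U V : 0 <= U -> 0 <= V -> 0 < U + V -> 0 < mixture_ratio al be U V.
  exact: mixture_ratio_gt0.
have h1_gt0 : 0 < mixture_ratio al be U1 V1.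
  by apply: h_gt0; [exact: U_ge0 | exact: V_ge0 | exact: ltr_pwDl U1_gt0 (V_ge0 y1)].
have h2_gt0 : 0 < mixture_ratio al be U2 V2.
  by apply: h_gt0; [exact: U_ge0 | exact: V_ge0 | exact: ltr_wpDl (U_ge0 y2) V2_gt0].
have la_a2_ge0 : 0 <= la * W a y2 by exact: mulr_ge0 (ltW la_gt0) (W_ge0 a y2).
have h2'_gt0 : 0 < mixture_ratio al be (la * W a y2) V2.
  by apply: h_gt0; [exact: la_a2_ge0 | exact: V_ge0 | exact: ltr_wpDl la_a2_ge0 V2_gt0].
apply: ler_pM.
- exact: ltW h1_gt0.
- by rewrite invr_ge0 ltW.
- by apply: le_mixture_ratioV => //; exact: mulr_ge0 (ltW mu_gt0) (W_ge0 b y1).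
- by rewrite lef_pV2 ?posrE //; apply: le_mixture_ratioU.
Qed.

End ChannelExtremes.

Lemma ratio_pairZ (R : fieldType) (c0 c1 A1 B1 A2 B2 : R) : c0 != 0 -> c1 != 0 ->
  (c0 * A1) / (c1 * B1) * ((c1 * B2) / (c0 * A2)) = A1 / B1 * (B2 / A2).
Proof.
move=> c0_neq0 c1_neq0; rewrite !invfM.
by rewrite -[RHS]mul1r -(mulfV c0_neq0) -[RHS]mul1r -(mulfV c1_neq0); ring.
Qed.

Section MixturePair.
Variables (R : realType) (X Y : finType) (W : X -> Y -> R).
Hypothesis W_ge0 : forall x y, 0 <= W x y.
Variables (al be : R) (u v : X -> R) (a b : X).
Hypotheses (al_gt0 : 0 < al) (be_gt0 : 0 < be) (albe_gt1 : 1 < al * be).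
Hypotheses (u_ge0 : forall x, 0 <= u x) (v_ge0 : forall x, 0 <= v x).
Hypotheses (ua_gt0 : 0 < u a) (va0 : v a = 0) (vb_gt0 : 0 < v b) (ub0 : u b = 0).

Local Notation p0 := (mixture al 1 u v).
Local Notation p1 := (mixture 1 be u v).
Local Notation S0 := (\sum_x p0 x).
Local Notation S1 := (\sum_x p1 x).
Local Notation P0 := (normalize p0).
Local Notation P1 := (normalize p1).

Let p0_ge0 x : 0 <= p0 x.
Proof. by rewrite /mixture mul1r addr_ge0 // mulr_ge0 // ltW. Qed.

Let p1_ge0 x : 0 <= p1 x.
Proof. by rewrite /mixture mul1r addr_ge0 // mulr_ge0 // ltW. Qed.

Let p01 x : p0 x <= al * p1 x.
Proof.
rewrite /mixture !mul1r mulrDr lerD2l mulrA.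
by rewrite ler_peMl // ltW.
Qed.

Let p10 x : p1 x <= be * p0 x.
Proof.
rewrite /mixture !mul1r mulrDr lerD2r mulrA.
by rewrite ler_peMl // mulrC ltW.
Qed.

Let S0_gt0 : 0 < S0.
Proof.
apply: lt_le_trans (le_sum_term a p0_ge0).
by rewrite /mixture va0 mulr0 addr0 mulr_gt0.
Qed.

Let S1_gt0 : 0 < S1.
Proof.
apply: lt_le_trans (le_sum_term a p1_ge0).
by rewrite /mixture va0 mulr0 addr0 mul1r.
Qed.

Let P01 x : P0 x <= al * S1 / S0 * P1 x.
Proof.
rewrite normalize_scale ?lt0r_neq0 //; apply: ler_wpM2l (p01 x).
by rewrite invr_ge0 ltW.
Qed.

Let P10 x : P1 x <= be * S0 / S1 * P0 x.
Proof.
rewrite normalize_scale ?lt0r_neq0 //; apply: ler_wpM2l (p10 x).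
by rewrite invr_ge0 ltW.
Qed.

Let P0_ge0 x : 0 <= P0 x.
Proof. by have [P0_ge0 _] := normalize_dist p0_ge0 S0_gt0. Qed.

Let P1_ge0 x : 0 <= P1 x.
Proof. by have [P1_ge0 _] := normalize_dist p1_ge0 S1_gt0. Qed.

Let max_ratio01 : max_ratio P0 P1 = al * S1 / S0.
Proof.
apply: (max_ratio_eq P0_ge0 P1_ge0 P01 (a := a)).
  by rewrite mulr_gt0 ?invr_gt0 // /mixture va0 mulr0 addr0 mul1r.
rewrite normalize_scale ?lt0r_neq0 //; congr (_ * _).
by rewrite /mixture va0 !mulr0 !addr0 mul1r.
Qed.

Let max_ratio10 : max_ratio P1 P0 = be * S0 / S1.
Proof.
apply: (max_ratio_eq P1_ge0 P0_ge0 P10 (a := b)).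
  by rewrite mulr_gt0 ?invr_gt0 // /mixture ub0 mulr0 add0r mul1r.
rewrite normalize_scale ?lt0r_neq0 //; congr (_ * _).
by rewrite /mixture ub0 !mulr0 !add0r mul1r.
Qed.

Let ln_max_ratios : ln (max_ratio P0 P1) + ln (max_ratio P1 P0) = ln (al * be).
Proof.
rewrite max_ratio01 max_ratio10 -lnM ?posrE ?divr_gt0 ?mulr_gt0 //; congr ln.
by field; rewrite !lt0r_neq0.
Qed.

Lemma mixture_pair_admissible : admissible P0 P1.
Proof.
split; first exact: normalize_dist.
split; first exact: normalize_dist.
by rewrite (DJinf_dominated P0_ge0 P1_ge0 P01 P10) ln_max_ratios lte_fin ln_gt0 ?ltry.
Qed.

Local Notation U := (out W u).
Local Notation V := (out W v).

Let out_ratio y1 y2 :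
  out W P0 y1 / out W P1 y1 * (out W P1 y2 / out W P0 y2) =
  mixture_ratio al be (U y1) (V y1) / mixture_ratio al be (U y2) (V y2).
Proof.
rewrite !outZ !out_mixture !mul1r ratio_pairZ ?invr_neq0 ?lt0r_neq0 //.
by rewrite /mixture_ratio invf_div.
Qed.

Lemma mixture_pair_sdpi_ratio_ge y1 y2 : 0 < U y1 + V y1 -> 0 < U y2 + V y2 ->
  ((ln (mixture_ratio al be (U y1) (V y1) / mixture_ratio al be (U y2) (V y2)) /
    ln (al * be))%:E <= sdpi_ratio W P0 P1)%E.
Proof.
move=> UV1_gt0 UV2_gt0.
rewrite (sdpi_ratio_dominated W_ge0 P0_ge0 P1_ge0 P01 P10) ln_max_ratios lee_fin.
rewrite ler_pM2r ?invr_gt0 ?ln_gt0 // -out_ratio.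
have U_ge0 := out_ge0 W_ge0 u_ge0; have V_ge0 := out_ge0 W_ge0 v_ge0.
have Q0_gt0 y : 0 < U y + V y -> 0 < out W P0 y.
  by move=> UV_gt0; rewrite outZ out_mixture mulr_gt0 ?invr_gt0 ?comb_gt0.
have Q1_gt0 y : 0 < U y + V y -> 0 < out W P1 y.
  by move=> UV_gt0; rewrite outZ out_mixture mulr_gt0 ?invr_gt0 ?comb_gt0.
by apply: ln_ratio_pair_le; rewrite divr_gt0 ?Q0_gt0 ?Q1_gt0.
Qed.

End MixturePair.

Lemma binary_pair_spec (R : realType) (X Y : finType) (W : X -> Y -> R) (a b : X)
    (al be la mu : R) :
  (forall x y, 0 <= W x y) -> a != b -> 0 < al -> 0 < be -> 1 < al * be ->
  0 < la -> 0 < mu ->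
  exists P0 P1, [/\ admissible P0 P1, binary_supported P0 P1 &
    forall y1 y2, 0 < la * W a y1 + mu * W b y1 -> 0 < la * W a y2 + mu * W b y2 ->
    ((ln (mixture_ratio al be (la * W a y1) (mu * W b y1) /
          mixture_ratio al be (la * W a y2) (mu * W b y2)) / ln (al * be))%:E
      <= sdpi_ratio W P0 P1)%E].
Proof.
move=> W_ge0 neq_ab al_gt0 be_gt0 albe_gt1 la_gt0 mu_gt0.
pose u x := la * delta a x; pose v x := mu * delta b x.
have u_ge0 x : 0 <= u x by rewrite mulr_ge0 ?ler0n ?ltW.
have v_ge0 x : 0 <= v x by rewrite mulr_ge0 ?ler0n ?ltW.
have [ua va] : u a = la /\ v a = 0 by rewrite /u /v /delta eqxx (negbTE neq_ab) mulr1 mulr0.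
have [ub vb] : u b = 0 /\ v b = mu.
  by rewrite /u /v /delta eqxx eq_sym (negbTE neq_ab) mulr1 mulr0.
have outU y : out W u y = la * W a y by rewrite outZ out_delta.
have outV y : out W v y = mu * W b y by rewrite outZ out_delta.
have ua_gt0 : 0 < u a by rewrite ua.
have vb_gt0 : 0 < v b by rewrite vb.
exists (normalize (mixture al 1 u v)), (normalize (mixture 1 be u v)); split.
- exact: mixture_pair_admissible al_gt0 be_gt0 albe_gt1 u_ge0 v_ge0 ua_gt0 va vb_gt0 ub.
- exists a, b => x xa xb.
  by split; rewrite /normalize /mixture /u /v /delta (negbTE xa) (negbTE xb) !mulr0 !addr0 mulr0.
- move=> y1 y2; rewrite -!outU -!outV.
  by apply: (mixture_pair_sdpi_ratio_ge W_ge0 al_gt0 be_gt0 albe_gt1 u_ge0 v_ge0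
    ua_gt0 va vb_gt0 ub).
Qed.

Lemma ratio_inv_le1 (R : realFieldType) (x y : R) : x / y * (y / x) <= 1.
Proof.
rewrite mulf_div [y * x]mulrC; have [-> | xy_neq0] := eqVneq (x * y) 0.
  by rewrite mul0r ler01.
by rewrite divff.
Qed.

Lemma gt0_div_den (R : numFieldType) (x y : R) : 0 <= y -> 0 < x / y -> 0 < y.
Proof.
move=> y_ge0 xy_gt0; rewrite lt_neqAle y_ge0 andbT eq_sym.
by apply: contraTneq xy_gt0 => ->; rewrite invr0 mulr0 ltxx.
Qed.

Lemma cross_gap_gt0 (R : realDomainType) (be q0 q1 q0' q1' : R) :
  0 <= q0 -> 0 <= q0' -> q1' <= be * q0' -> q1 * q0' < q0 * q1' -> 0 < be * q0 - q1.
Proof. by move=> *; nra. Qed.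

Section BinaryReduction.
Variables (R : realType) (X Y : finType) (W : X -> Y -> R).
Hypothesis chW : is_channel W.

Let W_ge0 x y : 0 <= W x y. Proof. by case: (chW x). Qed.

Lemma exists_binary_sdpi_ratio_ge0 (P0 P1 : X -> R) : admissible P0 P1 ->
  exists P0' P1', [/\ admissible P0' P1', binary_supported P0' P1' &
    (0 <= sdpi_ratio W P0' P1')%E].
Proof.
move=> adm; have [dist0 [dist1 _]] := adm.
have [P0_ge0 _] := dist0; have [P1_ge0 _] := dist1.
have [al_ge1 be_ge1 albe_gt1 _ _] := admissible_max_ratio adm.
have al_gt0 := lt_le_trans ltr01 al_ge1; have be_gt0 := lt_le_trans ltr01 be_ge1.
have [x0 _] := dist_pos dist0.
have [a al_a] := max_ratio_attained x0 P0_ge0 P1_ge0.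
have [b be_b] := max_ratio_attained x0 P1_ge0 P0_ge0.
have neq_ab : a != b.
  by apply: contraTneq albe_gt1 => ab; rewrite al_a be_b ab -leNgt ratio_inv_le1.
have [y Way_gt0] := dist_pos (chW a).
have [P0' [P1' [adm' bin' sdpi_ge]]] :=
  binary_pair_spec W_ge0 neq_ab al_gt0 be_gt0 albe_gt1 ltr01 ltr01.
exists P0', P1'; split => //.
have Wy_gt0 : 0 < 1 * W a y + 1 * W b y by rewrite !mul1r ltr_pwDl.
apply: le_trans (sdpi_ge y y Wy_gt0 Wy_gt0).
by rewrite divff ?ln1 ?mul0r // lt0r_neq0 // mixture_ratio_gt0 ?mulr_ge0.
Qed.

Lemma sdpi_ratio_attained (P0 P1 : X -> R) : admissible P0 P1 ->
  exists y1 y2, [/\ 0 < out W P1 y1, 0 < out W P0 y2 &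
    sdpi_ratio W P0 P1 =
    (ln (out W P0 y1 / out W P1 y1 * (out W P1 y2 / out W P0 y2)) /
     ln (max_ratio P0 P1 * max_ratio P1 P0))%:E].
Proof.
move=> adm; have [dist0 [dist1 _]] := adm.
have [P0_ge0 _] := dist0; have [P1_ge0 _] := dist1.
have [al_ge1 be_ge1 _ P01 P10] := admissible_max_ratio adm.
have distQ0 := out_dist chW dist0; have distQ1 := out_dist chW dist1.
have [Q0_ge0 _] := distQ0; have [Q1_ge0 _] := distQ1.
have [y0 _] := dist_pos distQ0.
have [y1 r1_max] := max_ratio_attained y0 Q0_ge0 Q1_ge0.
have [y2 r2_max] := max_ratio_attained y0 Q1_ge0 Q0_ge0.
have r1_gt0 : 0 < out W P0 y1 / out W P1 y1.
  rewrite -r1_max (lt_le_trans ltr01) // max_ratio_ge1 // => y.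
  exact: dominated_support (out_le W_ge0 P01 y).
have r2_gt0 : 0 < out W P1 y2 / out W P0 y2.
  rewrite -r2_max (lt_le_trans ltr01) // max_ratio_ge1 // => y.
  exact: dominated_support (out_le W_ge0 P10 y).
exists y1, y2; split; first exact: gt0_div_den (Q1_ge0 y1) r1_gt0.
  exact: gt0_div_den (Q0_ge0 y2) r2_gt0.
rewrite (sdpi_ratio_dominated W_ge0 P0_ge0 P1_ge0 P01 P10) r1_max r2_max.
by rewrite -!lnM ?posrE // ?(lt_le_trans ltr01 al_ge1) ?(lt_le_trans ltr01 be_ge1).
Qed.

Lemma extreme_directions_gt0 (P0 P1 : X -> R) (al be : R) y1 y2 :
  (forall x, 0 <= P0 x) -> (forall x, 0 <= P1 x) ->
  (forall x, P0 x <= al * P1 x) -> (forall x, P1 x <= be * P0 x) ->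
  out W P1 y1 * out W P0 y2 < out W P0 y1 * out W P1 y2 ->
  0 < out W (mixture be (-1) P0 P1) y1 /\ 0 < out W (mixture al (-1) P1 P0) y2.
Proof.
move=> P0_ge0 P1_ge0 P01 P10 cross; rewrite !out_mixture !mulN1r.
have [Q0_ge0 Q1_ge0] := (out_ge0 W_ge0 P0_ge0, out_ge0 W_ge0 P1_ge0).
split; first exact: cross_gap_gt0 (Q0_ge0 y1) (Q0_ge0 y2) (out_le W_ge0 P10 y2) cross.
apply: cross_gap_gt0 (Q1_ge0 y2) (Q1_ge0 y1) (out_le W_ge0 P01 y1) _.
by rewrite mulrC [X in _ < X]mulrC.
Qed.

Lemma exists_binary_ln_ratio_ge (P0 P1 : X -> R) y1 y2 : admissible P0 P1 ->
  let r := out W P0 y1 / out W P1 y1 * (out W P1 y2 / out W P0 y2) in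
  0 < out W P1 y1 -> 0 < out W P0 y2 -> 1 < r ->
  exists P0' P1', [/\ admissible P0' P1', binary_supported P0' P1' &
    ((ln r / ln (max_ratio P0 P1 * max_ratio P1 P0))%:E <= sdpi_ratio W P0' P1')%E].
Proof.
move=> adm r Q1y1_gt0 Q0y2_gt0 r_gt1; have [[P0_ge0 _] [[P1_ge0 _] _]] := adm.
have [al_ge1 be_ge1 albe_gt1 P01 P10] := admissible_max_ratio adm.
set al := max_ratio P0 P1 in al_ge1 albe_gt1 P01 *.
set be := max_ratio P1 P0 in be_ge1 albe_gt1 P10 *.
have al_gt0 := lt_le_trans ltr01 al_ge1; have be_gt0 := lt_le_trans ltr01 be_ge1.
pose u := mixture be (-1) P0 P1; pose v := mixture al (-1) P1 P0.
have u_ge0 x : 0 <= u x by rewrite /u /mixture mulN1r subr_ge0.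
have v_ge0 x : 0 <= v x by rewrite /v /mixture mulN1r subr_ge0.
have r_eq : r = mixture_ratio al be (out W u y1) (out W v y1) /
                mixture_ratio al be (out W u y2) (out W v y2).
  by rewrite /r -[out W P1 y2 / _]invf_div !(@out_ratio_mixture _ _ _ W _ _ al be) ?gt_eqF.
have [U1_gt0 V2_gt0] : 0 < out W u y1 /\ 0 < out W v y2.
  apply: extreme_directions_gt0 P0_ge0 P1_ge0 P01 P10 _.
  by move: r_gt1; rewrite /r mulf_div ltr_pdivlMr ?mulr_gt0 // mul1r.
have [a [b [la [mu [la_gt0 mu_gt0 Wa1_gt0 Wb2_gt0 r_le]]]]] :=
  point_masses_improve W_ge0 al_gt0 be_gt0 (ltW albe_gt1) u_ge0 v_ge0 U1_gt0 V2_gt0.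
have neq_ab : a != b.
  apply: contraTneq r_gt1 => ab; rewrite -leNgt r_eq (le_trans r_le) //.
  by move: Wb2_gt0; rewrite -ab => Wa2_gt0; rewrite mixture_ratio_point_div.
have [P0' [P1' [adm' bin' sdpi_ge]]] :=
  binary_pair_spec W_ge0 neq_ab al_gt0 be_gt0 albe_gt1 la_gt0 mu_gt0.
exists P0', P1'; split => //.
have pos1 : 0 < la * W a y1 + mu * W b y1.
  exact: ltr_pwDl (mulr_gt0 la_gt0 Wa1_gt0) (mulr_ge0 (ltW mu_gt0) (W_ge0 b y1)).
have pos2 : 0 < la * W a y2 + mu * W b y2.
  exact: ltr_wpDl (mulr_ge0 (ltW la_gt0) (W_ge0 a y2)) (mulr_gt0 mu_gt0 Wb2_gt0).
apply: le_trans (sdpi_ge y1 y2 pos1 pos2).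
rewrite lee_fin ler_pM2r ?invr_gt0 ?ln_gt0 //.
have r_gt0 : 0 < r := lt_trans ltr01 r_gt1.
move: r_gt0; rewrite r_eq => r_gt0.
by rewrite ler_ln ?posrE ?(lt_le_trans r_gt0 r_le).
Qed.

Lemma exists_binary_sdpi_ratio_ge (P0 P1 : X -> R) : admissible P0 P1 ->
  exists P0' P1', [/\ admissible P0' P1', binary_supported P0' P1' &
    (sdpi_ratio W P0 P1 <= sdpi_ratio W P0' P1')%E].
Proof.
move=> adm; have [y1 [y2 [Q1y1_gt0 Q0y2_gt0 ->]]] := sdpi_ratio_attained adm.
have [r_le1 | r_gt1] := leP (out W P0 y1 / out W P1 y1 * (out W P1 y2 / out W P0 y2)) 1.
  have [P0' [P1' [adm' bin' sdpi_ge0]]] := exists_binary_sdpi_ratio_ge0 adm.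
  exists P0', P1'; split => //; apply: le_trans sdpi_ge0.
  have [_ _ albe_gt1 _ _] := admissible_max_ratio adm.
  by rewrite lee_fin mulr_le0_ge0 ?ln_le0 // invr_ge0 ltW // ln_gt0.
exact: exists_binary_ln_ratio_ge.
Qed.

End BinaryReduction.

Unset Implicit Arguments.

Theorem theorem4p3 (R : realType) (X Y : finType) (W : X -> Y -> R) :
  is_channel W -> eta_J_inf W = eta_J_inf_binary W.
Proof.
move=> chW; apply/le_anti/andP; split; apply: ge_ereal_sup => r [P0 [P1]].
- move=> [adm ->]; have [P0' [P1' [adm' bin' le']]] := exists_binary_sdpi_ratio_ge chW adm.
  by apply: le_trans le' (ereal_sup_ubound _); exists P0', P1'.
- by move=> [adm [bin ->]]; apply: ereal_sup_ubound; exists P0, P1.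
Qed.
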